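(* Let $a,b,c,d,e\in\mathbb C$ with $a\notin\mathbb Z$ and $e\notin\{0,-1,-2,\dots\}$. Then, as an identity of formal power series in $x,y$, $$H_2(a,b,c,d;e;x,y)=F(a,b;e;x)\,F(c,d;1-a;-y)+\sum_{k=1}^\infty\sum_{l=1}^k\frac{(-1)^{k+l}(k-1)!}{(l-1)!\,l!\,(k-l)!}\,\frac{(b)_k(c)_l(d)_l}{(1-a)_l(e)_k}\,x^ky^l\,F(a+k,b+k;e+k;x)\,F(c+l,d+l;1-a+l;-y).$$
   Context: Pochhammer symbol: $(\lambda)_k=\Gamma(\lambda+k)/\Gamma(\lambda)$ for every integer $k$ (possibly negative) whenever defined; in particular $(\lambda)_0=1$ and $(\lambda)_k=\lambda(\lambda+1)\cdots(\lambda+k-1)$ for $k\ge1$. Gauss function $F(a,b;c;x)=\sum_{k\ge0}\frac{(a)_k(b)_k}{(c)_k k!}x^k$. Horn's function $H_2(a,b,c,d;e;x,y)=\sum_{p,q\ge0}\frac{(a)_{p-q}(b)_p(c)_q(d)_q}{(e)_p\,p!\,q!}x^py^q$. All functions are regarded as formal power series in $x,y$; products of functions are products of power series; the infinite double sum converges in the formal (degree) topology since its $(k,l)$ term has total degree at least $k+l$. *)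

(* Complex parameters: C is any numClosedFieldType
   (algebraically closed, char 0, with conjugation; e.g. algC). *)
From HB Require Import structures.
From mathcomp Require Import all_boot all_order all_algebra.
Set Implicit Arguments. Unset Strict Implicit. Unset Printing Implicit Defensive.
Import Order.TTheory GRing.Theory Num.Theory.
Local Open Scope ring_scope.

Section Defs.
Variable C : numClosedFieldType.

Definition poch (l : C) (n : nat) : C := \prod_(i < n) (l + i%:R).

(* Pochhammer symbol (lambda)_k for k : int, = Gamma(l+k)/Gamma(l);
   for k = -(n+1): 1 / ((l-1)(l-2)...(l-(n+1))) *)
Definition pochz (l : C) (k : int) : C :=
  match k with
  | Posz n => poch l n
  | Negz n => (\prod_(i < n.+1) (l - (i.+1)%:R))^-1
  end.

(* formal power series in x, y: coefficient of x^p y^q *)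
Definition fps2 := nat -> nat -> C.

Definition fps2_mul (f g : fps2) : fps2 := fun p q =>
  \sum_(i < p.+1) \sum_(j < q.+1) f i j * g (p - i)%N (q - j)%N.
Definition fps2_add (f g : fps2) : fps2 := fun p q => f p q + g p q.
Definition fps2_scale (s : C) (f : fps2) : fps2 := fun p q => s * f p q.
Definition fps2_zero : fps2 := fun _ _ => 0.
Definition fps2_mon (k l : nat) : fps2 := fun p q => ((p == k) && (q == l))%:R.
Definition fpsX (f : nat -> C) : fps2 := fun p q => if q == 0%N then f p else 0.
Definition fpsY (f : nat -> C) : fps2 := fun p q => if p == 0%N then f q else 0.
Definition fps_neg (f : nat -> C) : nat -> C := fun n => (-1) ^+ n * f n.

(* Sum of a family T k l of series, converging in the formal (degree)
   topology because T k l has total order >= k + l: the coefficient of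
   x^p y^q only receives contributions from (k,l) with k + l <= p + q. *)
Definition fps2_sum (T : nat -> nat -> fps2) : fps2 := fun p q =>
  \sum_(k < (p + q).+1) \sum_(l < (p + q).+1 | (k + l <= p + q)%N) T k l p q.

Definition gaussF (a b c : C) : nat -> C := fun n =>
  poch a n * poch b n / (poch c n * n`!%:R).

Definition H2 (a b c d e : C) : fps2 := fun p q =>
  pochz a (p%:Z - q%:Z) * poch b p * poch c q * poch d q
    / (poch e p * p`!%:R * q`!%:R).

Definition rhs_term (a b c d e : C) (k l : nat) : fps2 :=
  if (1 <= l <= k)%N then
    fps2_scale
      ((-1) ^+ (k + l)%N * (k.-1)`!%:R / ((l.-1)`!%:R * l`!%:R * (k - l)%N`!%:R)
        * (poch b k * poch c l * poch d l / (poch (1 - a) l * poch e k)))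
      (fps2_mul (fps2_mon k l)
         (fps2_mul (fpsX (gaussF (a + k%:R) (b + k%:R) (e + k%:R)))
                   (fpsY (fps_neg (gaussF (c + l%:R) (d + l%:R) (1 - a + l%:R))))))
  else fps2_zero.

End Defs.

From HB Require Import structures.
From mathcomp Require Import all_boot all_order all_algebra.
From mathcomp Require Import ring zify.
From Stdlib Require Import FunctionalExtensionality.
Set Implicit Arguments.
Unset Strict Implicit.
Unset Printing Implicit Defensive.

Import Order.TTheory GRing.Theory Num.Theory.
Local Open Scope ring_scope.

(* Both sides are multiples of the coefficient
   K of F(a,b;e;x) F(c,d;1-a;-y).  The (k,l) summand on the right contributes
   K (-1)^k C(p,k) k!/(a)_k C(q,l) C(k-1,k-l), and Vandermonde's convolution sums
   this over l to K (-1)^k C(p,k) (q)_k/(a)_k.  On the left,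
   (a)_{p-q} = (-1)^q (a-q)_p/(1-a)_q, and the Chu-Vandermonde identity
   sum_k (-1)^k C(p,k) (q)_k (a+k)_{p-k} = (a-q)_p rewrites (a-q)_p/(a)_p as the
   same sum over k, whose k = 0 term is the product F F itself. *)

Section Pochhammer.
Variable C : numClosedFieldType.
Implicit Types x y : C.

Lemma poch0 x : poch x 0 = 1.
Proof. by rewrite /poch big_ord0. Qed.

Lemma pochS x n : poch x n.+1 = poch x n * (x + n%:R).
Proof. by rewrite /poch big_ord_recr. Qed.

Lemma pochD x m n : poch x (m + n) = poch x m * poch (x + m%:R) n.
Proof.
elim: n => [|n IHn]; first by rewrite addn0 poch0 mulr1.
by rewrite addnS !pochS IHn natrD addrA mulrA.
Qed.

Lemma poch_split x k n : (k <= n)%N -> poch x n = poch x k * poch (x + k%:R) (n - k).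
Proof. by move=> le_kn; rewrite -pochD subnKC. Qed.

Lemma fact_neq0 n : (n`!%:R : C) != 0.
Proof. by rewrite pnatr_eq0 -lt0n fact_gt0. Qed.

Lemma poch_neq0 x n : (forall i : nat, x != - i%:R) -> poch x n != 0.
Proof.
move=> x_neq; elim: n => [|n IHn]; first by rewrite poch0 oner_neq0.
by rewrite pochS mulf_neq0 // addr_eq0.
Qed.

Lemma poch_subnE x n : poch (x - n%:R) n = \prod_(i < n) (x - i.+1%:R).
Proof.
symmetry; rewrite /poch (reindex_inj rev_ord_inj) /=; apply: eq_bigr => i _.
by rewrite subnSK // natrB ?(ltnW (ltn_ord i)); ring.
Qed.

Lemma poch_reflect x n : poch (x - n%:R) n = (-1) ^+ n * poch (1 - x) n.
Proof.
rewrite poch_subnE /poch -[X in (-1) ^+ X](card_ord n) -prodrN.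
by apply: eq_bigr => i _; rewrite -addn1 natrD; ring.
Qed.

Lemma poch_vandermonde x y n :
  poch (x + y) n = \sum_(k < n.+1) 'C(n, k)%:R * poch x k * poch y (n - k).
Proof.
elim: n => [|n IHn]; first by rewrite big_ord1 !poch0 bin0 mulr1 mul1r.
have step (k : 'I_n.+1) : 'C(n, k)%:R * poch x k * poch y (n - k) * (x + y + n%:R) =
    'C(n, k)%:R * poch x k.+1 * poch y (n - k) + 'C(n, k)%:R * poch x k * poch y (n - k).+1.
  rewrite !pochS; have -> : n%:R = k%:R + (n - k)%:R :> C by rewrite -natrD subnKC // -ltnS.
  ring.
rewrite pochS IHn mulr_suml (eq_bigr _ (fun k _ => step k)) big_split /=.
rewrite [RHS]big_ord_recl /= bin0 subn0 poch0 mulr1 mul1r.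
under [X in _ = _ + X]eq_bigr do rewrite /bump /= add1n binS natrD !mulrDl subSS.
rewrite big_split /= addrA [_ + \sum_(i < n.+1) _]addrC; congr (_ + _).
rewrite big_ord_recl /= bin0 subn0 poch0 mulr1 mul1r big_ord_recr /=.
rewrite bin_small // !mul0r addr0; congr (_ + _).
by apply: eq_bigr => i _; rewrite /bump /= add1n subnSK.
Qed.

Lemma chu_vandermonde x y n :
  \sum_(k < n.+1) (-1) ^+ k * 'C(n, k)%:R * poch y k * poch (x + k%:R) (n - k)
  = poch (x - y) n.
Proof.
have -> : x - y = (x - y + n%:R) - n%:R by rewrite addrK.
rewrite poch_reflect (_ : 1 - _ = y + (1 - (x + n%:R))); last by ring.
rewrite poch_vandermonde mulr_sumr; apply: eq_bigr => k _.
have le_kn : (k <= n)%N by rewrite -ltnS.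
have -> : x + k%:R = (1 - (1 - (x + n%:R))) - (n - k)%:R by rewrite natrB //; ring.
rewrite poch_reflect subKr.
have -> : (-1) ^+ n = (-1) ^+ k * (-1) ^+ (n - k) :> C by rewrite -exprD subnKC.
ring.
Qed.

Lemma sum_chu_div x y n : poch x n != 0 ->
  \sum_(k < n.+1) (-1) ^+ k * 'C(n, k)%:R * poch y k / poch x k
  = poch (x - y) n / poch x n.
Proof.
move=> xn_neq0; rewrite -chu_vandermonde mulr_suml; apply: eq_bigr => k _.
have le_kn : (k <= n)%N by rewrite -ltnS.
have := xn_neq0; rewrite (poch_split x le_kn) mulf_eq0 negb_or.
case/andP=> xk_neq0 xkn_neq0.
by field; apply/andP.
Qed.

Lemma poch_nat q k : poch (q%:R : C) k = ('C(q + k.-1, k) * k`!)%:R.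
Proof.
case: q => [|q].
  case: k => [|k]; first by rewrite poch0 bin0.
  by rewrite (pochD _ 1) pochS poch0 add0r mulr0 mul0r bin_small.
apply: (mulIf (fact_neq0 q)).
have -> : poch (q.+1)%:R k * q`!%:R = (q + k)`!%:R :> C.
  elim: k => [|k IHk]; first by rewrite poch0 mul1r addn0.
  by rewrite pochS mulrAC IHk addnS factS natrM mulrC -natrD addSn.
case: k => [|k]; first by rewrite bin0 fact0 mul1r addn0.
by rewrite -natrM /= addSnnS -mulnA -(bin_fact (leq_addl q k.+1)) addnK mulnA.
Qed.

End Pochhammer.

Section NonInteger.
Variable C : numClosedFieldType.
Implicit Types x : C.

Definition notint x := forall z : int, x != z%:~R.

Lemma notint_addz x z : notint x -> notint (x + z%:~R).
Proof. by move=> x_notint w; rewrite -(subrK z%:~R w%:~R) (can_eq (addrK _)) -intrB. Qed.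

Lemma notint_addn x n : notint x -> notint (x + n%:R).
Proof. exact: notint_addz x n. Qed.

Lemma notint_subn x n : notint x -> notint (x - n%:R).
Proof. by move=> /(notint_addz (- n%:Z)); rewrite intrN. Qed.

Lemma notint_opp x : notint x -> notint (- x).
Proof. by move=> x_notint z; rewrite -eqr_opp opprK -intrN. Qed.

Lemma notint_1sub x : notint x -> notint (1 - x).
Proof.
move=> /(notint_addz (-1)) /notint_opp.
by rewrite (_ : - (x + (-1)%:~R) = 1 - x) // intrN opprD opprK addrC.
Qed.

Lemma poch_notint_neq0 x n : notint x -> poch x n != 0.
Proof. by move=> x_notint; apply: poch_neq0 => i; have := x_notint (- i%:Z); rewrite intrN. Qed.

Lemma pochz_subn x p q : notint x ->
  pochz x (p%:Z - q%:Z) = (-1) ^+ q * poch (x - q%:R) p / poch (1 - x) q.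
Proof.
move=> x_notint; have xq_neq0 := poch_notint_neq0 q (notint_1sub x_notint).
apply: (mulIf xq_neq0); rewrite divfK //.
case: (leqP q p) => [le_qp|lt_pq].
  rewrite subzn //= (poch_split _ le_qp) subrK poch_reflect.
  by rewrite !mulrA -exprMn mulrNN mulr1 expr1n mul1r mulrC.
have -> : p%:Z - q%:Z = Negz (q - p).-1.
  rewrite NegzE prednK; last by rewrite subn_gt0.
  by rewrite -subzn ?opprB // ltnW.
have -> : poch (1 - x) q = (-1) ^+ q * poch (x - q%:R) q.
  by rewrite poch_reflect mulrA -exprMn mulrNN mulr1 expr1n mul1r.
rewrite /= prednK; last by rewrite subn_gt0.
rewrite -poch_subnE (poch_split (x - q%:R) (ltnW lt_pq)).
rewrite (_ : x - q%:R + p%:R = x - (q - p)%:R); last by rewrite natrB ?(ltnW lt_pq); ring.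
have := poch_notint_neq0 (q - p) (notint_subn (q - p) x_notint).
by move: (poch _ (q - p)) => P P_neq0; field.
Qed.

End NonInteger.

Lemma sumr_ord_trunc (R : nmodType) (F : nat -> R) m n :
  (m <= n)%N -> (forall i, (m <= i < n)%N -> F i = 0) ->
  \sum_(i < n) F i = \sum_(i < m) F i.
Proof.
move=> le_mn F_tail.
rewrite -(subnKC le_mn) big_split_ord /= [X in _ + X]big1 ?addr0 // => i _.
by apply: F_tail; rewrite leq_addr /= -{2}(subnKC le_mn) ltn_add2l.
Qed.

Lemma vandermonde_pred q k : (0 < k)%N ->
  \sum_(l < q.+1) (if (1 <= l <= k)%N then 'C(q, l) * 'C(k.-1, k - l) else 0)%N
  = 'C(q + k.-1, k).
Proof.
move=> k_gt0; rewrite -(binomial.Vandermonde q k.-1 k).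
set G := fun l => (if (1 <= l <= k)%N then 'C(q, l) * 'C(k.-1, k - l) else 0)%N.
rewrite -(@sumr_ord_trunc _ G q.+1 (q + k).+1) ?ltnS ?leq_addr //; last first.
  by move=> i /andP[lt_qi _]; rewrite /G bin_small // if_same.
rewrite (@sumr_ord_trunc _ G k.+1 (q + k).+1) ?ltnS ?leq_addl //; last first.
  by move=> i /andP[lt_ki _]; rewrite /G ifF // (leqNgt i k) lt_ki andbF.
apply: eq_bigr => i _; rewrite /G; case: (posnP i) => [->|i_gt0].
  by rewrite subn0 bin0 mul1n bin_small // ltn_predL.
by rewrite -ltnS ltn_ord.
Qed.

Section Coefficients.
Variable C : numClosedFieldType.

Lemma coef_fpsX_mul_fpsY (f g : nat -> C) p q :
  fps2_mul (fpsX f) (fpsY g) p q = f p * g q.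
Proof.
rewrite /fps2_mul (bigD1 ord_max) //= [X in _ + X]big1 ?addr0; last first.
  move=> i ne_i; apply: big1 => j _; rewrite /fpsY subn_eq0 ifF ?mulr0 //.
  apply/negbTE; rewrite -ltnNge ltn_neqAle -ltnS ltn_ord andbT.
  by move: ne_i; apply: contraNneq => eq_ip; exact/eqP/val_inj.
rewrite (bigD1 ord0) //= [X in _ + X]big1 ?addr0; last first.
  move=> j ne_j; rewrite /fpsX ifF ?mul0r //; apply/negbTE.
  by move: ne_j; apply: contraNneq => eq_j0; exact/eqP/val_inj.
by rewrite /fpsX /fpsY subnn subn0.
Qed.

Lemma coef_fps2_mon_mul (G : fps2 C) k l p q :
  fps2_mul (fps2_mon C k l) G p q =
  if (k <= p)%N && (l <= q)%N then G (p - k)%N (q - l)%N else 0.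
Proof.
rewrite /fps2_mul /fps2_mon; under eq_bigr do under eq_bigr do rewrite -mulnb natrM.
case: ifP => [/andP[le_kp le_lq]|k_l_out].
  rewrite (bigD1 (Ordinal (le_kp : (k < p.+1)%N))) //= [X in _ + X]big1 ?addr0; last first.
    move=> i ne_i; apply: big1 => j _; rewrite (_ : _ == k = false) ?mul0r //.
    by apply/negbTE; move: ne_i; apply: contraNneq => eq_ik; exact/eqP/val_inj.
  rewrite (bigD1 (Ordinal (le_lq : (l < q.+1)%N))) //= [X in _ + X]big1 ?addr0; last first.
    move=> j ne_j; rewrite (_ : _ == l = false) ?mulr0 ?mul0r //.
    by apply/negbTE; move: ne_j; apply: contraNneq => eq_jl; exact/eqP/val_inj.
  by rewrite !eqxx !mul1r.
apply: big1 => i _; apply: big1 => j _.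
case: eqP => [eq_ik|]; last by rewrite !mul0r.
case: eqP => [eq_jl|]; last by rewrite mulr0 mul0r.
by move: k_l_out; rewrite -eq_ik -eq_jl -ltnS ltn_ord -ltnS ltn_ord.
Qed.

Lemma coef_fps2_sum_box (T : nat -> nat -> fps2 C) p q :
  (forall k l, (p < k)%N || (q < l)%N -> T k l p q = 0) ->
  fps2_sum T p q = \sum_(k < p.+1) \sum_(l < q.+1) T k l p q.
Proof.
move=> T_out; rewrite /fps2_sum.
have row k :
    \sum_(l < (p + q).+1 | (k + l <= p + q)%N) T k l p q = \sum_(l < q.+1) T k l p q.
  rewrite big_mkcond /= (@sumr_ord_trunc _
    (fun l => if (k + l <= p + q)%N then T k l p q else 0) q.+1) ?ltnS ?leq_addl //.
    apply: eq_bigr => l _ /=; case: ifP => // not_le; rewrite T_out //.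
    by apply/orP; move/negbT: not_le; have := ltn_ord l; lia.
  by move=> l /andP[lt_ql _]; case: ifP => // _; rewrite T_out // lt_ql orbT.
under eq_bigr => k _ do rewrite row.
rewrite (@sumr_ord_trunc _ (fun k => \sum_(l < q.+1) T k l p q) p.+1) ?ltnS ?leq_addr //.
move=> k /andP[lt_pk _].
by apply: big1 => l _; rewrite T_out // lt_pk.
Qed.

End Coefficients.

Section HornH2.
Variables (C : numClosedFieldType) (a b c d e : C).
Hypothesis a_notint : notint a.
Hypothesis e_neq_negn : forall n : nat, e != - n%:R.

Local Notation gauss_prod p q := (gaussF a b e p * fps_neg (gaussF c d (1 - a)) q).

Lemma poch_e_shift_neq0 m n : poch (e + m%:R) n != 0.
Proof.
apply: poch_neq0 => i; have := e_neq_negn (m + i); apply: contra_neq => eq_emi.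
by rewrite natrD opprD -eq_emi; ring.
Qed.

Lemma H2_coefE p q :
  H2 a b c d e p q =
  gauss_prod p q * \sum_(k < p.+1) (-1) ^+ k * 'C(p, k)%:R * poch q%:R k / poch a k.
Proof.
have ap_neq0 := poch_notint_neq0 p a_notint.
have aq_neq0 := poch_notint_neq0 q (notint_1sub a_notint).
have ep_neq0 : poch e p != 0 by have := poch_e_shift_neq0 0 p; rewrite addr0.
rewrite sum_chu_div // /H2 pochz_subn // /gaussF /fps_neg.
move: ((-1) ^+ q) => s.
by field; do ![apply/andP; split]; rewrite ?fact_neq0.
Qed.

Lemma rhs_term_coefE k l p q : (1 <= l <= k)%N -> (k <= p)%N -> (l <= q)%N ->
  rhs_term a b c d e k l p q =
  gauss_prod p q *
  ((-1) ^+ k * 'C(p, k)%:R * k`!%:R / poch a k * ('C(q, l) * 'C(k.-1, k - l))%:R).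
Proof.
move=> lk_range le_kp le_lq; rewrite /rhs_term lk_range /fps2_scale.
rewrite coef_fps2_mon_mul le_kp le_lq coef_fpsX_mul_fpsY /fps_neg /gaussF.
case/andP: lk_range => l_gt0 le_lk.
rewrite /= (poch_split a le_kp) (poch_split b le_kp) (poch_split e le_kp).
rewrite (poch_split c le_lq) (poch_split d le_lq) (poch_split (1 - a) le_lq).
rewrite -(bin_fact le_kp) -(bin_fact le_lq).
have bin_pred_fact : 'C(k.-1, k - l) * ((k - l)`! * (l.-1)`!) = (k.-1)`!.
  have le_kl_pred : (k - l <= k.-1)%N by lia.
  by rewrite -(bin_fact le_kl_pred) (_ : k.-1 - (k - l) = l.-1)%N //; lia.
have sign_q : (-1) ^+ q = (-1) ^+ l * (-1) ^+ (q - l) :> C by rewrite -exprD subnKC.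
rewrite -bin_pred_fact !natrM exprD sign_q.
have ak_neq0 := poch_notint_neq0 k a_notint.
have akp_neq0 := poch_notint_neq0 (p - k) (notint_addn k a_notint).
have a'l_neq0 := poch_notint_neq0 l (notint_1sub a_notint).
have a'lq_neq0 := poch_notint_neq0 (q - l) (notint_addn l (notint_1sub a_notint)).
have ek_neq0 : poch e k != 0 by have := poch_e_shift_neq0 0 k; rewrite addr0.
have ekp_neq0 := poch_e_shift_neq0 k (p - k).
have binp_neq0 : 'C(p, k)%:R != 0 :> C by rewrite pnatr_eq0 -lt0n bin_gt0.
have binq_neq0 : 'C(q, l)%:R != 0 :> C by rewrite pnatr_eq0 -lt0n bin_gt0.
move: ((-1) ^+ k) ((-1) ^+ l) ((-1) ^+ (q - l)) => s1 s2 s3.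
by field; do ![apply/andP; split]; rewrite ?fact_neq0.
Qed.

Lemma rhs_term_out k l p q : (p < k)%N || (q < l)%N -> rhs_term a b c d e k l p q = 0.
Proof.
move=> out; rewrite /rhs_term; case: ifP => // _.
rewrite /fps2_scale coef_fps2_mon_mul.
case: ifP => [/andP[le_kp le_lq]|_]; last by rewrite mulr0.
by move: out; rewrite ltnNge le_kp ltnNge le_lq.
Qed.

Lemma rhs_term_row k p q : (0 < k <= p)%N ->
  \sum_(l < q.+1) rhs_term a b c d e k l p q =
  gauss_prod p q * ((-1) ^+ k * 'C(p, k)%:R * poch q%:R k / poch a k).
Proof.
case/andP=> k_gt0 le_kp.
have -> : (-1) ^+ k * 'C(p, k)%:R * poch q%:R k / poch a k =
    (-1) ^+ k * 'C(p, k)%:R * k`!%:R / poch a k * 'C(q + k.-1, k)%:R.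
  by rewrite poch_nat natrM; move: (poch a k)^-1 => r; ring.
rewrite -(vandermonde_pred q k_gt0) natr_sum !mulr_sumr; apply: eq_bigr => l _.
case: ifP => lk_range; last by rewrite /rhs_term lk_range !mulr0.
by rewrite rhs_term_coefE // -ltnS.
Qed.

End HornH2.

Theorem mainTheorem2 (C : numClosedFieldType) (a b c d e : C)
  (ha : forall z : int, a != z%:~R)
  (he : forall n : nat, e != - n%:R) :
  H2 a b c d e =
  fps2_add
    (fps2_mul (fpsX (gaussF a b e)) (fpsY (fps_neg (gaussF c d (1 - a)))))
    (fps2_sum (rhs_term a b c d e)).
Proof.
apply: functional_extensionality => p; apply: functional_extensionality => q.
rewrite /fps2_add coef_fpsX_mul_fpsY H2_coefE // coef_fps2_sum_box; last first.
  by move=> k l; apply: rhs_term_out.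
have row0 : \sum_(l < q.+1) rhs_term a b c d e 0 l p q = 0.
  by apply: big1 => l _; rewrite /rhs_term ifF //; apply/negbTE/negP; lia.
rewrite [in LHS]big_ord_recl [in RHS]big_ord_recl /= row0 add0r.
rewrite expr0 bin0 !poch0 divr1 !mulr1 mulrDr mulr1 mulr_sumr.
by congr (_ + _); apply: eq_bigr => k _; rewrite rhs_term_row // ltn_ord.
Qed.
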